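(* If $f_N\in H_N^{\mathrm{sip}}$ converges weakly to $f\in H^{\mathrm{sbm}}$ with respect to the Hilbert space convergence $H_N^{\mathrm{sip}}\to H^{\mathrm{sbm}}$, then $\lim_{N\to\infty}f_N(0)=f(0)$.
   Context: $\gamma>0$; $\mu_N$ gives mass $\frac1N$ to each point of $\frac1N\mathbb Z$; $\nu_{\gamma,N}=\mu_N+\sqrt2\gamma\delta_0$; $H_N^{\mathrm{sip}}=L^2(\frac1N\mathbb Z,\nu_{\gamma,N})$; $H^{\mathrm{sbm}}=L^2(\mathbb R,dx+\sqrt2\gamma\delta_0)$ (so $f(0)$ is well defined for $f\in H^{\mathrm{sbm}}$). Hilbert convergence is witnessed by $C=\{f+\lambda\mathbf 1_{\{0\}}:f\in C_c^\infty(\mathbb R),\lambda\in\mathbb R\}$ and $\Phi_Nf=f|_{\frac1N\mathbb Z}$. Strong convergence $g_N\to g$: there exist $\tilde g_M\in C$ with $\|\tilde g_M-g\|_{H^{\mathrm{sbm}}}\to0$ and $\lim_M\limsup_N\|\Phi_N\tilde g_M-g_N\|_{H_N^{\mathrm{sip}}}=0$. Weak convergence $f_N\to f$: $\langle f_N,g_N\rangle_{H_N^{\mathrm{sip}}}\to\langle f,g\rangle_{H^{\mathrm{sbm}}}$ for every strongly convergent $g_N\to g$. *)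

From HB Require Import structures.
From mathcomp Require Import all_boot all_order all_algebra.
From mathcomp Require Import all_classical all_reals all_analysis.
Set Implicit Arguments. Unset Strict Implicit. Unset Printing Implicit Defensive.
Import Order.TTheory GRing.Theory Num.Theory.
Import numFieldNormedType.Exports.
Local Open Scope classical_set_scope.
Local Open Scope ring_scope.

Section Defs.
Variable R : realType.

(* ---------- the discrete spaces H_N^sip = L^2(1/N Z, nu_{gamma,N}) ----------
   An element of H_N^sip is represented by a function u : int -> R, where
   u k is the value at the lattice point k/N.  nu_{gamma,N} gives mass 1/N
   to each k/N and an extra mass sqrt 2 * gamma to the point 0 (k = 0). *)

(* u is square-summable w.r.t. nu_{gamma,N} (the atom does not matter). *)
Definition sip_mem (u : int -> R) : Prop :=
  (\esum_(k in [set: int]) ((u k) ^+ 2)%:E < +oo)%E.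

(* <u, v>_{H_N^sip} = int u v d nu_{gamma,N}, the integral being
   (1/N) (sum of positive part - sum of negative part) + sqrt2 gamma u(0) v(0) *)
Definition sip_dot (gamma : R) (N : nat) (u v : int -> R) : R :=
  N%:R^-1 * (fine (\esum_(k in [set: int]) (Num.max (u k * v k) 0)%:E)
             - fine (\esum_(k in [set: int]) (Num.max (- (u k * v k)) 0)%:E))
  + Num.sqrt 2 * gamma * (u 0 * v 0).

Definition sip_norm (gamma : R) (N : nat) (u : int -> R) : R :=
  Num.sqrt (sip_dot gamma N u u).

Definition sbm_mem (f : R -> R) : Prop :=
  measurable_fun [set: R] f /\
  (@lebesgue_measure R).-integrable [set: R] (fun x => ((f x) ^+ 2)%:E).

Definition sbm_dot (gamma : R) (f g : R -> R) : R :=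
  Rintegral (@lebesgue_measure R) [set: R] (fun x => f x * g x)
  + Num.sqrt 2 * gamma * (f 0 * g 0).

Definition sbm_norm (gamma : R) (f : R -> R) : R := Num.sqrt (sbm_dot gamma f f).

Definition smooth (f : R -> R) : Prop :=
  forall (n : nat) (x : R), derivable (derive1n n f) x 1.

Definition compact_support (f : R -> R) : Prop :=
  exists M : R, forall x : R, M < `|x| -> f x = 0.

Definition in_core (g : R -> R) : Prop :=
  exists (phi : R -> R) (lambda : R),
    smooth phi /\ compact_support phi /\
    g = (fun x => phi x + (if x == 0 then lambda else 0)).

Definition Phi (N : nat) (f : R -> R) : int -> R :=
  fun k => f (k%:~R / N%:R).

(* ---------- strong / weak convergence along N -> oo ----------
   Sequences are indexed by n : nat, the n-th term living in H_N^sip with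
   N = n.+1 (so that N ranges over the positive integers). *)
Definition strong_conv (gamma : R) (g : nat -> int -> R) (h : R -> R) : Prop :=
  (forall n, sip_mem (g n)) /\ sbm_mem h /\
  exists gt : nat -> R -> R,
    (forall M, in_core (gt M)) /\
    (sbm_norm gamma (fun x => gt M x - h x) @[M --> \oo] --> 0) /\
    ((fun M => limn_esup
        (fun n => (sip_norm gamma n.+1 (fun k => Phi n.+1 (gt M) k - g n k))%:E))
       @ \oo --> 0%E).

Definition weak_conv (gamma : R) (f : nat -> int -> R) (h : R -> R) : Prop :=
  (forall n, sip_mem (f n)) /\ sbm_mem h /\
  forall (g : nat -> int -> R) (k : R -> R), strong_conv gamma g k ->
    sip_dot gamma n.+1 (f n) (g n) @[n --> \oo] --> sbm_dot gamma h k.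

End Defs.

From HB Require Import structures.
From mathcomp Require Import all_boot all_order all_algebra.
From mathcomp Require Import all_classical all_reals all_analysis.
From mathcomp Require Import measurable_realfun.
Import Order.TTheory GRing.Theory Num.Theory.
Import numFieldNormedType.Exports.
Local Open Scope classical_set_scope.
Local Open Scope ring_scope.

(* Test the weak convergence against the indicator of the atom {0}.  It lies in
   the core and restricts to the lattice indicator of 0, so the constant
   sequence of lattice indicators converges strongly to it.  Pairing with it
   gives (1/N + sqrt 2 gamma) f_N(0) in H_N^sip, and sqrt 2 gamma f(0) in
   H^sbm, where Lebesgue measure does not see the point 0; since
   sqrt 2 gamma > 0, dividing out the factor gives f_N(0) -> f(0). *)

Section point_support.
Context {R : realType}.

Lemma esum_supp1 {T : choiceType} (t : T) (a : T -> \bar R) :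
  (0 <= a t)%E -> (forall i, i != t -> a i = 0%E) ->
  \esum_(i in [set: T]) a i = a t.
Proof.
move=> a_ge0 a_supp; rewrite -(esum_set1 a_ge0) [RHS]esum_mkcond.
by apply: eq_esum => i _; rewrite in_set1; case: eqVneq => [->|/a_supp].
Qed.

Lemma lebesgue_integral_supp1 (r : R) (F : R -> \bar R) :
  (forall x, x != r -> F x = 0%E) ->
  (\int[@lebesgue_measure R]_(x in [set: R]) F x = 0)%E.
Proof.
move=> F_supp; have mTr : measurable ([set: R] `\ r) by exact: measurableD.
have F0 : {in [set: R] `\ r, F =1 cst 0%E}.
  by move=> x /set_mem [_ /eqP]; exact: F_supp.
rewrite -(integral_setD1 (r := r)) //; last first.
  by apply: eq_measurable_fun (measurable_cst _) => x /F0 ->.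
by rewrite (eq_integral (cst 0%E)) ?integral0.
Qed.

Lemma indic_set1 (T : eqType) (t x : T) : \1_[set t] x = (x == t)%:R :> R.
Proof. by rewrite indicE in_set1. Qed.

End point_support.

Lemma cvg_mulr_cancel (R : numFieldType) (T : Type) (F : set_system T)
    {FF : Filter F} (u v : T -> R) (c l : R) :
  c != 0 -> v @ F --> c -> (fun x => v x * u x) @ F --> c * l -> u @ F --> l.
Proof.
move=> c_neq0 v_c vu_cl.
have w_l : (fun x => (v x)^-1 * (v x * u x)) @ F --> l.
  by rewrite -(mulKf c_neq0 l); apply: cvgM => //; exact: cvgV.
have u_near : \forall x \near F, (v x)^-1 * (v x * u x) = u x.
  by near=> x; rewrite mulKf //; near: x; exact: cvgr_neq0 v_c c_neq0.
by apply: cvg_trans (near_eq_cvg u_near) w_l.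
Unshelve. all: by end_near.
Qed.

Lemma smooth_cst (R : realType) (k : R) : smooth (cst k).
Proof.
have dk n : derive1n n (cst k) = cst (if n is 0 then k else 0).
  elim: n => [//|n IH]; rewrite derive1nS IH; apply/funext => x; exact: derive1_cst.
by move=> n x; rewrite dk; exact: derivable_cst.
Qed.

Section restriction.
Context {R : realType} (gamma : R).

Lemma sip_norm_cst0 (N : nat) : sip_norm gamma N (cst 0) = 0.
Proof.
rewrite /sip_norm /sip_dot !esum1 => [|i _|i _] /=.
- by rewrite subrr !mulr0 add0r sqrtr0.
- by rewrite mulr0 oppr0 maxxx.
- by rewrite mulr0 maxxx.
Qed.

Lemma sbm_norm_cst0 : sbm_norm gamma (cst 0) = 0.
Proof.
rewrite /sbm_norm /sbm_dot /Rintegral (lebesgue_integral_supp1 0) => [|x _].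
  by rewrite /= !mulr0 addr0 sqrtr0.
by rewrite mulr0.
Qed.

Lemma strong_conv_Phi (g : R -> R) :
  in_core g -> sbm_mem g -> (forall n, sip_mem (Phi n.+1 g)) ->
  strong_conv gamma (fun n => Phi n.+1 g) g.
Proof.
move=> g_core g_mem Phi_mem; split=> //; split=> //.
exists (fun _ => g); split=> //.
have gBg : (fun x => g x - g x) = cst 0 by apply/funext => x; rewrite subrr.
have PBP N : (fun k => Phi N g k - Phi N g k) = cst 0.
  by apply/funext => k; rewrite subrr.
split; first by rewrite gBg sbm_norm_cst0; exact: cvg_cst.
under eq_fun => M do under eq_fun => n do rewrite PBP sip_norm_cst0.
by rewrite is_cvg_limn_esupE ?lim_cst //; exact: cvg_cst.
Qed.

End restriction.

Section indicator_at_origin.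
Context {R : realType} (gamma : R).

Lemma sip_dot_indic0 (N : nat) (u : int -> R) :
  sip_dot gamma N u \1_[set 0] = (N%:R^-1 + Num.sqrt 2 * gamma) * u 0.
Proof.
have posBneg : Num.max (u 0) 0 - Num.max (- u 0) 0 = u 0.
  exact: (congr1 (@^~ (0 : int)) (funrposBneg u)).
have off0 i : i != 0 -> u i * \1_[set 0] i = 0.
  by move=> /negbTE i_neq0; rewrite indic_set1 i_neq0 mulr0.
rewrite /sip_dot !(esum_supp1 0) ?lee_fin ?le_max ?lexx ?orbT //=.
- by rewrite indic_set1 eqxx mulr1 posBneg mulrDl.
- by move=> i /off0 ->; rewrite oppr0 maxxx.
- by move=> i /off0 ->; rewrite maxxx.
Qed.

Lemma sbm_dot_indic0 (h : R -> R) :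
  sbm_dot gamma h \1_[set 0] = Num.sqrt 2 * gamma * h 0.
Proof.
rewrite /sbm_dot /Rintegral (lebesgue_integral_supp1 0) => [|x /negbTE x_neq0].
  by rewrite /= add0r indic_set1 eqxx mulr1.
by rewrite indic_set1 x_neq0 mulr0.
Qed.

Lemma Phi_indic0 (N : nat) : (0 < N)%N -> Phi N \1_[set 0] = \1_[set 0] :> (int -> R).
Proof.
move=> N_gt0; apply/funext => k; rewrite /Phi !indic_set1.
by rewrite mulf_eq0 invr_eq0 pnatr_eq0 intr_eq0 -[(N == 0)%N]negbK -lt0n N_gt0 orbF.
Qed.

Lemma sip_mem_indic0 : sip_mem (\1_[set 0] : int -> R).
Proof.
rewrite /sip_mem (esum_supp1 0) ?ltry ?lee_fin ?sqr_ge0 // => i /negbTE i_neq0.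
by rewrite indic_set1 i_neq0 expr0n.
Qed.

Lemma sbm_mem_indic0 : sbm_mem (\1_[set 0] : R -> R).
Proof.
have m_indic0 : measurable_fun [set: R] (\1_[set 0] : R -> R).
  exact: measurable_indic.
split=> //; apply/integrableP; split.
  by apply/measurable_EFinP; exact: measurable_funX.
rewrite (lebesgue_integral_supp1 0) ?ltry // => x /negbTE x_neq0.
by rewrite indic_set1 x_neq0 expr0n /= normr0.
Qed.

Lemma in_core_indic0 : in_core (\1_[set 0] : R -> R).
Proof.
exists (cst 0), 1; split; first exact: smooth_cst.
split; first by exists 0.
by apply/funext => x; rewrite indic_set1 add0r; case: (x == 0).
Qed.

Lemma strong_conv_indic0 : strong_conv gamma (fun _ => \1_[set 0]) \1_[set 0].
Proof.
have -> : (fun _ : nat => \1_[set 0]) = fun n => Phi n.+1 (\1_[set 0] : R -> R).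
  by apply/funext => n; rewrite Phi_indic0.
apply: strong_conv_Phi => [||n]; rewrite ?Phi_indic0 //.
- exact: in_core_indic0.
- exact: sbm_mem_indic0.
- exact: sip_mem_indic0.
Qed.

End indicator_at_origin.

Theorem proposition5p9 (R : realType) (gamma : R) (hgamma : 0 < gamma)
    (f : nat -> int -> R) (h : R -> R) :
  weak_conv gamma f h -> f n 0 @[n --> \oo] --> h 0.
Proof.
move=> [_ [_ weak_f]].
have := weak_f _ _ (strong_conv_indic0 gamma).
under eq_fun do rewrite sip_dot_indic0.
rewrite sbm_dot_indic0 => dot_cvg; apply: cvg_mulr_cancel dot_cvg.
  by rewrite gt_eqF // mulr_gt0 ?sqrtr_gt0.
rewrite -[X in _ --> X]add0r; apply: cvgD (cvg_cst _).
exact: cvg_harmonic.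
Qed.
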